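(* Let $\mathcal{V}=[0,1]_\oplus$, let $X$ be a set, and let $T$ be either the powerset monad $\mathcal{P}$ with evaluation map $\mathit{ev}_T=\sup$ (with $\sup\emptyset=0$), or the countably supported distribution monad $\mathcal{D}$ with evaluation map $\mathit{ev}_T=\mathbb{E}$ (expected value, $\mathbb{E}(p)=\sum_v v\cdot p(v)$). Let $F$ be a functor and $(TX,\mu_X,c)$ an $F$-$T$-bialgebra for some natural transformation $\zeta\colon TF\Rightarrow FT$, where $\mu$ is the multiplication of $T$. Let $u$ be the up-to function on maps $d\colon TX\times TX\to[0,1]$ given by $u(d)(y_1,y_2)=\inf\{K_{\{\mathit{ev}_T\}}(d)(t_1,t_2)\mid t_1,t_2\in TTX,\ \mu_X(t_1)=y_1,\ \mu_X(t_2)=y_2\}$. Then for every $d\colon TX\times TX\to[0,1]$: (i) if $T=\mathcal{P}$: $u(d)\big(\bigcup_{i\in I}X_i,\bigcup_{i\in I}Y_i\big)\le\sup_{i\in I}d(X_i,Y_i)$ for every family $(X_i,Y_i)_{i\in I}$ of pairs of subsets of $X$; (ii) if $T=\mathcal{D}$: $u(d)\big(\sum_{i\in I}r_i\cdot p_i,\sum_{i\in I}r_i\cdot q_i\big)\le\sum_{i\in I}r_i\cdot d(p_i,q_i)$ for every countable family of $r_i\in[0,1]$ with $\sum_{i\in I}r_i=1$ and $p_i,q_i\in\mathcal{D}(X)$. (Here $\le$ and $\inf$, $\sup$ refer to the usual order on the reals.)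
   Context: $[0,1]_\oplus$ is the quantale on $[0,1]$ with reversed order ($a\sqsubseteq b$ iff $a\ge b$) and truncated addition $a\oplus b=\min(a+b,1)$; its residuation is $d_{\mathcal{V}}(a,b)=\max(b-a,0)$, and quantale joins are real infima. For a map $d\colon Y\times Y\to[0,1]$, $\gamma_Y(d)=\{p\colon Y\to[0,1]\mid d_{\mathcal{V}}(p(y_1),p(y_2))\le d(y_1,y_2)\ \forall y_1,y_2\}$, and $K_{\{\mathit{ev}_T\}}(d)(t_1,t_2)=\sup_{p\in\gamma_Y(d)}d_{\mathcal{V}}(\mathit{ev}_T(Tp(t_1)),\mathit{ev}_T(Tp(t_2)))$ for $t_1,t_2\in TY$. $\mathcal{D}(X)$ is the set of probability distributions on $X$ with countable support, with $\mathcal{D}f(p)(y)=\sum_{f(x)=y}p(x)$, unit the Dirac distributions and multiplication $\mu(P)(x)=\sum_\nu P(\nu)\nu(x)$. An $F$-$T$-bialgebra for $\zeta$ is a triple $(Y,a,c)$ with $a\colon TY\to Y$, $c\colon Y\to FY$ and $c\circ a=Fa\circ\zeta_Y\circ Tc$. *)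

From HB Require Import structures.
From mathcomp Require Import all_boot all_order all_algebra.
From mathcomp Require Import all_classical all_reals all_analysis.
Set Implicit Arguments. Unset Strict Implicit. Unset Printing Implicit Defensive.
Import Order.TTheory GRing.Theory Num.Theory.
Local Open Scope classical_set_scope.
Local Open Scope ring_scope.

(* Residuation of the quantale [0,1]_oplus : d_V(a,b) = max(b - a, 0). *)
Definition dV {R : realType} (a b : R) : R := Num.max (b - a) 0.

Definition Pmap {X Y : Type} (f : X -> Y) (A : set X) : set Y := f @` A.
Definition Pmu {X : Type} (t : set (set X)) : set X := \bigcup_(A in t) A.
(* evaluation map ev_P = sup on subsets of [0,1], with sup(empty) = 0
   (the real [sup] of MathComp-Analysis satisfies sup set0 = 0). *)
Definition evP {R : realType} (A : set R) : R := sup A.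

Definition gammaP {R : realType} {X : Type} (d : set X -> set X -> R)
  : set (set X -> R) :=
  [set p | (forall A, 0 <= p A <= 1) /\
           (forall A B, dV (p A) (p B) <= d A B)].

Definition KP {R : realType} {X : Type} (d : set X -> set X -> R)
  (t1 t2 : set (set X)) : \bar R :=
  ereal_sup [set (dV (evP (Pmap p t1)) (evP (Pmap p t2)))%:E | p in gammaP d].

Definition uP {R : realType} {X : Type} (d : set X -> set X -> R)
  (y1 y2 : set X) : \bar R :=
  ereal_inf [set k | exists t1 t2 : set (set X),
     [/\ Pmu t1 = y1, Pmu t2 = y2 & k = KP d t1 t2]].

Definition is_distr {R : realType} {X : choiceType} (p : X -> R) : Prop :=
  [/\ (forall x, 0 <= p x),
      countable [set x | p x != 0] &
      (\esum_(x in [set: X]) (p x)%:E = 1)%E].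

Record distr (R : realType) (X : choiceType) := Distr {
  pmf :> X -> R ;
  pmf_is_distr : is_distr pmf }.

HB.instance Definition _ (R : realType) (X : choiceType) :=
  gen_eqMixin (distr R X).
HB.instance Definition _ (R : realType) (X : choiceType) :=
  gen_choiceMixin (distr R X).

Definition Dmap_fun {R : realType} {X Y : choiceType} (f : X -> Y)
  (p : X -> R) : Y -> R :=
  fun y => fine (\esum_(x in [set x | f x = y]) (p x)%:E).

Definition Dmu_fun {R : realType} {X : choiceType}
  (P : distr R (distr R X)) : X -> R :=
  fun x => fine (\esum_(nu in [set: distr R X]) (P nu * nu x)%:E).

Definition Ev {R : realType} (q : R -> R) : R :=
  fine (\esum_(v in [set v : R | 0 <= v <= 1]) (v * q v)%:E).

Definition gammaD {R : realType} {X : choiceType}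
  (d : distr R X -> distr R X -> R) : set (distr R X -> R) :=
  [set p | (forall y, 0 <= p y <= 1) /\
           (forall y1 y2, dV (p y1) (p y2) <= d y1 y2)].

Definition KD {R : realType} {X : choiceType}
  (d : distr R X -> distr R X -> R) (t1 t2 : distr R (distr R X)) : \bar R :=
  ereal_sup [set (dV (Ev (Dmap_fun p t1)) (Ev (Dmap_fun p t2)))%:E
            | p in gammaD d].

Definition uD {R : realType} {X : choiceType}
  (d : distr R X -> distr R X -> R) (y1 y2 : distr R X) : \bar R :=
  ereal_inf [set k | exists t1 t2 : distr R (distr R X),
     [/\ (forall x, Dmu_fun t1 x = y1 x), (forall x, Dmu_fun t2 x = y2 x)
       & k = KD d t1 t2]].

(* Both bounds are witnessed by explicit preimages under the multiplication.
   For P, take the families {X_i | i in I} and {Y_i | i in I}, whose unions are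
   the given ones; for a nonexpansive f we have f(Y_i) <= f(X_i) + d(X_i, Y_i)
   for each i, hence sup_i f(Y_i) <= sup_i f(X_i) + sup_i d(X_i, Y_i).
   For D, take sum_i r_i delta_{p_i} and sum_i r_i delta_{q_i} (the pushforwards
   of r along p and q), which flatten to the given mixtures.  The expected value
   of D f (sum_i r_i delta_{z_i}) is sum_i r_i f(z_i), so averaging the bounds
   f(q_i) <= f(p_i) + d(p_i, q_i) with weights r_i gives the claim. *)
From HB Require Import structures.
From mathcomp Require Import all_boot all_order all_algebra.
From mathcomp Require Import all_classical all_reals all_analysis.
From mathcomp Require Import lra.
Set Implicit Arguments. Unset Strict Implicit. Unset Printing Implicit Defensive.
Import Order.TTheory GRing.Theory Num.Theory.
Local Open Scope classical_set_scope.
Local Open Scope ring_scope.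

Section esum_facts.
Variable R : realType.
Local Open Scope ereal_scope.

Lemma esumZl (T : choiceType) (S : set T) (a : T -> \bar R) (c : R) :
  (0 <= c)%R -> (forall x, S x -> 0 <= a x) ->
  \esum_(x in S) (c%:E * a x) = c%:E * \esum_(x in S) a x.
Proof.
move=> c0 a0; rewrite /esum -ereal_supZl//; last first.
  by apply/set0P; exists 0; exists set0; [exact: fsets_set0 | rewrite fsbig_set0].
rewrite image_comp; congr ereal_sup; apply: eq_imagel => A [finA AS] /=.
rewrite !fsbig_finite// big_seq [in RHS]big_seq ge0_sume_distrr// => i.
by rewrite in_fset_set// inE => /AS/a0.
Qed.

Lemma esum_subset_le (T : choiceType) (A B : set T) (a : T -> \bar R) :
  A `<=` B -> \esum_(x in A) a x <= \esum_(x in B) a x.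
Proof.
move=> AB; apply: ereal_sup_le => _ [F [finF FA] <-]; exists F => //.
by split => // x /FA /AB.
Qed.

Section weighted_sums.
Variables (I : choiceType) (r : I -> R).
Hypotheses (r_ge0 : forall i, (0 <= r i)%R)
           (r_sum1 : \esum_(i in [set: I]) (r i)%:E = 1).

Lemma fin_num_esum_weighted (A : set I) (a : I -> R) :
  (forall i, 0 <= a i <= 1)%R -> \esum_(i in A) (r i * a i)%:E \is a fin_num.
Proof.
move=> a01; rewrite ge0_fin_numE; last first.
  by apply: esum_ge0 => i _; rewrite lee_fin mulr_ge0//; case/andP: (a01 i).
apply: le_lt_trans (esum_subset_le _ (subsetT A)) _.
apply: (@le_lt_trans _ _ (\esum_(i in [set: I]) (r i)%:E)); last by rewrite r_sum1 ltry.
apply: le_esum => i _; rewrite lee_fin -[leRHS]mulr1 ler_wpM2l//.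
by case/andP: (a01 i).
Qed.

Lemma dV_esum_le (a b c : I -> R) :
  (forall i, 0 <= a i <= 1)%R -> (forall i, 0 <= b i <= 1)%R ->
  (forall i, 0 <= c i <= 1)%R -> (forall i, dV (a i) (b i) <= c i)%R ->
  (dV (fine (\esum_(i in [set: I]) (r i * a i)%:E))
      (fine (\esum_(i in [set: I]) (r i * b i)%:E))
   <= fine (\esum_(i in [set: I]) (r i * c i)%:E))%R.
Proof.
move=> a01 b01 c01 abc.
have nneg (e : I -> R) : (forall i, 0 <= e i <= 1)%R ->
    forall i, [set: I] i -> 0 <= (r i * e i)%:E.
  by move=> e01 i _; rewrite lee_fin mulr_ge0//; case/andP: (e01 i).
have b_le_ac : \esum_(i in [set: I]) (r i * b i)%:E <=
    \esum_(i in [set: I]) (r i * a i)%:E + \esum_(i in [set: I]) (r i * c i)%:E.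
  rewrite -esumD; [apply: le_esum => i _ | by apply: nneg..].
  rewrite -EFinD lee_fin -mulrDr ler_wpM2l//.
  by move: (abc i); rewrite /dV ge_max => /andP[? _]; lra.
have c_ge0 : (0 <= fine (\esum_(i in [set: I]) (r i * c i)%:E))%R.
  exact/fine_ge0/esum_ge0/nneg.
move: b_le_ac.
rewrite -[X in X <= _]fineK ?fin_num_esum_weighted//.
rewrite -[X in _ <= X + _]fineK ?fin_num_esum_weighted//.
rewrite -[X in _ <= _ + X]fineK ?fin_num_esum_weighted//.
by rewrite -EFinD lee_fin /dV ge_max c_ge0 andbT; lra.
Qed.

End weighted_sums.

Section pushforward.
Variables (I Y : choiceType) (r : I -> R).
Hypotheses (r_ge0 : forall i, (0 <= r i)%R)
           (r_sum1 : \esum_(i in [set: I]) (r i)%:E = 1).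

Lemma esum_Dmap_fun_mul (f : I -> Y) (S : set Y) (g : Y -> R) :
  (forall y, S y -> 0 <= g y)%R ->
  \esum_(y in S) (Dmap_fun f r y * g y)%:E =
  \esum_(i in f @^-1` S) (r i * g (f i))%:E.
Proof.
move=> g_ge0.
have fin_fiber y : \esum_(i in [set i | f i = y]) (r i)%:E \is a fin_num.
  have := @fin_num_esum_weighted I r r_ge0 r_sum1 [set i | f i = y] (fun=> 1%R).
  by under eq_esum do rewrite mulr1; apply => i; rewrite ler01 lexx.
transitivity (\esum_(y in S) \esum_(i in [set i | f i = y]) (r i * g (f i))%:E).
  apply: eq_esum => y Sy; have gy := g_ge0 y Sy.
  rewrite /Dmap_fun EFinM fineK// muleC -esumZl//; last by move=> i _; rewrite lee_fin.
  by apply: eq_esum => i /= <-; rewrite muleC -EFinM.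
rewrite (esum_esum (J := fun y => [set i | f i = y])
                   (a := fun y i => (r i * g (f i))%:E)); last first.
  by move=> y i Sy /= fy; rewrite lee_fin mulr_ge0// g_ge0// fy.
rewrite (reindex_esum (f @^-1` S) _ (fun i => (f i, i)))//; split.
- by move=> i Si; split.
- by move=> i j _ _ [].
- by move=> [y i] [Sy /= fy]; exists i => //=; rewrite /preimage /= fy.
Qed.

Lemma Dmap_fun_comp (Z : choiceType) (f : I -> Y) (g : Y -> Z) :
  Dmap_fun g (Dmap_fun f r) = Dmap_fun (g \o f) r.
Proof.
apply/funext => z; rewrite /Dmap_fun; congr fine.
transitivity (\esum_(y in [set y | g y = z]) (Dmap_fun f r y * 1)%:E).
  by apply: eq_esum => y _; rewrite mulr1.
by rewrite esum_Dmap_fun_mul//; apply: eq_esum => i _; rewrite mulr1.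
Qed.

Lemma is_distr_Dmap_fun (f : I -> Y) :
  countable [set: I] -> is_distr (Dmap_fun f r).
Proof.
move=> cI; split.
- by move=> y; apply/fine_ge0/esum_ge0 => i _; rewrite lee_fin.
- apply: (sub_countable _ (sub_countable (card_image_le f [set: I]) cI)).
  apply: subset_card_le => y /= Dy_neq0.
  have [[i fi]|nf] := pselect (exists i, f i = y); first by exists i.
  move: Dy_neq0; rewrite /Dmap_fun (_ : [set x | f x = y] = set0) ?esum_set0 ?eqxx//.
  by apply/seteqP; split => // i /= fi; apply: nf; exists i.
- transitivity (\esum_(y in [set: Y]) (Dmap_fun f r y * 1)%:E).
    by apply: eq_esum => y _; rewrite mulr1.
  rewrite esum_Dmap_fun_mul// -r_sum1.
  by apply: eq_esum => i _; rewrite mulr1.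
Qed.

End pushforward.

Lemma Ev_Dmap_fun (I : choiceType) (r h : I -> R) :
  (forall i, 0 <= r i)%R -> \esum_(i in [set: I]) (r i)%:E = 1 ->
  (forall i, 0 <= h i <= 1)%R ->
  Ev (Dmap_fun h r) = fine (\esum_(i in [set: I]) (r i * h i)%:E).
Proof.
move=> r_ge0 r_sum1 h01; rewrite /Ev; congr fine.
under eq_esum do rewrite mulrC.
rewrite esum_Dmap_fun_mul// => [|v /andP[]//].
by rewrite (_ : _ @^-1` _ = [set: I]) //; apply/seteqP; split => // i _; exact: h01.
Qed.

End esum_facts.

Lemma dV_sup_le (R : realType) (I : Type) (a b c : I -> R) :
  has_ubound (range a) -> has_ubound (range c) ->
  (forall i, dV (a i) (b i) <= c i) ->
  dV (sup (range a)) (sup (range b)) <= sup (range c).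
Proof.
move=> a_ub c_ub abc.
have [[i0 _]|I_empty] := pselect (exists i : I, True); last first.
  have range0 (e : I -> R) : range e = set0.
    by apply/seteqP; split => // y [i _ _]; apply: I_empty; exists i.
  by rewrite !range0 sup0 /dV subrr maxxx.
have le_sup (e : I -> R) i : has_ubound (range e) -> e i <= sup (range e).
  by move=> e_ub; apply: (ub_le_sup e_ub); exists i.
have c_ge0 : 0 <= sup (range c).
  apply: le_trans (le_sup _ i0 c_ub).
  by apply: le_trans (abc i0); rewrite /dV le_max lexx orbT.
rewrite /dV ge_max c_ge0 andbT lerBlDl.
apply: ge_sup; first by exists (b i0), i0.
move=> _ [i _ <-].
have := abc i; rewrite /dV ge_max => /andP[abc_i _].
have := lerD (le_sup _ i a_ub) (le_sup _ i c_ub); lra.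
Qed.

Section powerset.
Variables (R : realType) (X : Type) (d : set X -> set X -> R).

Lemma uP_le_KP (t1 t2 : set (set X)) : (uP d (Pmu t1) (Pmu t2) <= KP d t1 t2)%E.
Proof. by apply: ereal_inf_lbound; exists t1, t2. Qed.

Lemma KP_range_le (I : Type) (Xs Ys : I -> set X) :
  (forall A B, 0 <= d A B <= 1) ->
  (KP d (range Xs) (range Ys) <= (sup (range (fun i => d (Xs i) (Ys i))))%:E)%E.
Proof.
move=> d01; apply: ge_ereal_sup => _ [p [p01 p_nonexp] <-].
rewrite lee_fin /evP /Pmap !image_comp; apply: dV_sup_le => [||i].
- by exists 1 => _ [i _ <-]; case/andP: (p01 (Xs i)).
- by exists 1 => _ [i _ <-]; case/andP: (d01 (Xs i) (Ys i)).
- exact: p_nonexp.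
Qed.

End powerset.

Lemma uD_le_KD (R : realType) (X : choiceType) (d : distr R X -> distr R X -> R)
    (t1 t2 : distr R (distr R X)) (y1 y2 : distr R X) :
  (forall x, Dmu_fun t1 x = y1 x) -> (forall x, Dmu_fun t2 x = y2 x) ->
  (uD d y1 y2 <= KD d t1 t2)%E.
Proof. by move=> mu1 mu2; apply: ereal_inf_lbound; exists t1, t2. Qed.

Section distribution.
Variables (R : realType) (X I : choiceType) (r : I -> R).
Hypotheses (r_ge0 : forall i, 0 <= r i) (I_countable : countable [set: I])
           (r_sum1 : (\esum_(i in [set: I]) (r i)%:E = 1)%E).

Definition Dmix (zs : I -> distr R X) : distr R (distr R X) :=
  Distr (is_distr_Dmap_fun r_ge0 r_sum1 zs I_countable).

Lemma Dmu_fun_Dmix (zs : I -> distr R X) x :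
  Dmu_fun (Dmix zs) x = fine (\esum_(i in [set: I]) (r i * zs i x)%:E).
Proof.
rewrite /Dmu_fun /= esum_Dmap_fun_mul// => nu _.
by case: (pmf_is_distr nu).
Qed.

Lemma Ev_Dmap_fun_Dmix (p : distr R X -> R) (zs : I -> distr R X) :
  (forall nu, 0 <= p nu <= 1) ->
  Ev (Dmap_fun p (Dmix zs)) = fine (\esum_(i in [set: I]) (r i * p (zs i))%:E).
Proof.
by move=> p01; rewrite /= Dmap_fun_comp// (Ev_Dmap_fun r_ge0)// => i; apply: p01.
Qed.

Variable d : distr R X -> distr R X -> R.

Lemma KD_Dmix_le (ps qs : I -> distr R X) :
  (forall p q, 0 <= d p q <= 1) ->
  (KD d (Dmix ps) (Dmix qs) <= \esum_(i in [set: I]) (r i * d (ps i) (qs i))%:E)%E.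
Proof.
move=> d01; apply: ge_ereal_sup => _ [p [p01 p_nonexp] <-].
rewrite !Ev_Dmap_fun_Dmix// -[X in (_ <= X)%E]fineK ?lee_fin.
  by apply: dV_esum_le => // i; apply: p_nonexp.
exact: fin_num_esum_weighted.
Qed.

End distribution.

Theorem mainTheorem15 (R : realType) (X : choiceType) :
  (* (i) T = P, ev = sup *)
  (forall d : set X -> set X -> R,
     (forall A B, 0 <= d A B <= 1) ->
     forall (I : Type) (Xs Ys : I -> set X),
       (uP d (\bigcup_(i in [set: I]) Xs i) (\bigcup_(i in [set: I]) Ys i)
        <= (sup [set d (Xs i) (Ys i) | i in [set: I]])%:E)%E)
  /\
  (* (ii) T = D, ev = expected value *)
  (forall d : distr R X -> distr R X -> R,
     (forall p q, 0 <= d p q <= 1) ->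
     forall (I : choiceType) (r : I -> R) (ps qs : I -> distr R X)
            (y1 y2 : distr R X),
       countable [set: I] ->
       (forall i, 0 <= r i <= 1) ->
       (\esum_(i in [set: I]) (r i)%:E = 1)%E ->
       (forall x, y1 x = fine (\esum_(i in [set: I]) (r i * ps i x)%:E)) ->
       (forall x, y2 x = fine (\esum_(i in [set: I]) (r i * qs i x)%:E)) ->
       (uD d y1 y2 <= \esum_(i in [set: I]) (r i * d (ps i) (qs i))%:E)%E).
Proof.
split.
- move=> d d01 I Xs Ys.
  have := uP_le_KP d (range Xs) (range Ys); rewrite /Pmu !bigcup_image => uP_le.
  exact: le_trans uP_le (KP_range_le Xs Ys d01).
- move=> d d01 I r ps qs y1 y2 I_countable r01 r_sum1 y1E y2E.
  have r_ge0 i : 0 <= r i by case/andP: (r01 i).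
  apply: le_trans (KD_Dmix_le r_ge0 I_countable r_sum1 _ _ d01).
  by apply: uD_le_KD => x; rewrite Dmu_fun_Dmix ?y1E ?y2E.
Qed.
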